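(* For every projection algebra $P$, every DRC-semigroup $S$, and every projection algebra morphism $\phi:P\to\mathbf P(S)$, there exists a unique DRC-morphism $\Phi:\mathbb F(P)\to S$ whose restriction to $P$ (identified with $\mathbf P(\mathbb F(P))$ via $p\leftrightarrow\overline{x_p}$) is $\phi$, i.e.\ $\overline{x_p}\,\Phi=p\phi$ for all $p\in P$.
   Context: Maps are written on the right and composed left to right. A projection algebra is a set $P$ with maps $\theta_p,\delta_p:P\to P$ ($p\in P$) such that for all $p,q$: $p\theta_p=p$, $p\delta_p=p$; $p\theta_{q\theta_p}=q\theta_p$, $p\delta_{q\delta_p}=q\delta_p$; $\theta_q\theta_{q\theta_p}=\theta_q\theta_p$, $\delta_q\delta_{q\delta_p}=\delta_q\delta_p$; $\theta_p\delta_p=\theta_p$, $\delta_p\theta_p=\delta_p$; $\theta_{p\delta_q}\theta_p=\theta_q\theta_p$, $\delta_{p\theta_q}\delta_p=\delta_q\delta_p$. A projection algebra morphism $\phi:P\to P'$ satisfies $(q\theta_p)\phi=(q\phi)\theta'_{p\phi}$, $(q\delta_p)\phi=(q\phi)\delta'_{p\phi}$. Write $p\,\mathscr F\,q$ iff $p=q\delta_p$ and $q=p\theta_q$. A DRC-semigroup is $(S,\cdot,D,R)$, $(S,\cdot)$ a semigroup, $D,R:S\to S$ with, for all $a,b$: $D(a)a=a$, $aR(a)=a$; $D(ab)=D(aD(b))$, $R(ab)=R(R(a)b)$; $D(ab)=D(a)D(ab)D(a)$, $R(ab)=R(b)R(ab)R(b)$; $R(D(a))=D(a)$, $D(R(a))=R(a)$.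 A DRC-morphism preserves $\cdot,D,R$. $\mathbf P(S)=\{D(a):a\in S\}$ is a projection algebra under $q\theta_p=R(qp)$, $q\delta_p=D(pq)$. $\mathbb F(P)$ is the semigroup presented by generators $x_p$ ($p\in P$) and relations $x_p^2=x_p$, $x_px_q=x_px_{p\theta_q}$, $x_px_q=x_{q\delta_p}x_q$; every element equals $\overline{x_{p_1}\cdots x_{p_k}}$ for some $p_1\mathscr F\cdots\mathscr F p_k$ with $p_1,p_k$ determined, and it is a DRC-semigroup with $D(\overline{x_{p_1}\cdots x_{p_k}})=\overline{x_{p_1}}$, $R(\overline{x_{p_1}\cdots x_{p_k}})=\overline{x_{p_k}}$, whose projections are exactly the $\overline{x_p}$, $p\in P$. *)

(* Maps are written on the right: we write [theta p q] for
   q θ_p and [delta p q] for q δ_p. *)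
From Stdlib Require Import List ClassicalEpsilon.
Import ListNotations.
Set Implicit Arguments.

Record ProjAlg := {
  pa_car :> Type;
  theta : pa_car -> pa_car -> pa_car;
  delta : pa_car -> pa_car -> pa_car;
  pa_theta_id : forall p, theta p p = p;
  pa_delta_id : forall p, delta p p = p;
  pa_theta2 : forall p q, theta (theta p q) p = theta p q;
  pa_delta2 : forall p q, delta (delta p q) p = delta p q;
  pa_theta3 : forall p q x, theta (theta p q) (theta q x) = theta p (theta q x);
  pa_delta3 : forall p q x, delta (delta p q) (delta q x) = delta p (delta q x);
  pa_theta_delta : forall p x, delta p (theta p x) = theta p x;
  pa_delta_theta : forall p x, theta p (delta p x) = delta p x;
  pa_theta5 : forall p q x, theta p (theta (delta q p) x) = theta p (theta q x);
  pa_delta5 : forall p q x, delta p (delta (theta q p) x) = delta p (delta q x)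
}.

(** Morphism condition between two sets with operations θ, δ
    (written generically so it applies to P(S) without repackaging). *)
Definition is_pa_morphism {A B : Type}
  (thA deA : A -> A -> A) (thB deB : B -> B -> B) (f : A -> B) : Prop :=
  (forall p q, f (thA p q) = thB (f p) (f q)) /\
  (forall p q, f (deA p q) = deB (f p) (f q)).

Record DRC := {
  drc_car :> Type;
  mul : drc_car -> drc_car -> drc_car;
  Dop : drc_car -> drc_car;
  Rop : drc_car -> drc_car;
  drc_assoc : forall a b c, mul a (mul b c) = mul (mul a b) c;
  drc_DL : forall a, mul (Dop a) a = a;
  drc_RR : forall a, mul a (Rop a) = a;
  drc_D_mul : forall a b, Dop (mul a b) = Dop (mul a (Dop b));
  drc_R_mul : forall a b, Rop (mul a b) = Rop (mul (Rop a) b);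
  drc_D_sand : forall a b, Dop (mul a b) = mul (mul (Dop a) (Dop (mul a b))) (Dop a);
  drc_R_sand : forall a b, Rop (mul a b) = mul (mul (Rop b) (Rop (mul a b))) (Rop b);
  drc_RD : forall a, Rop (Dop a) = Dop a;
  drc_DR : forall a, Dop (Rop a) = Rop a
}.

Definition is_drc_morphism {A B : Type}
  (mA : A -> A -> A) (DA RA : A -> A) (mB : B -> B -> B) (DB RB : B -> B)
  (f : A -> B) : Prop :=
  (forall a b, f (mA a b) = mB (f a) (f b)) /\
  (forall a, f (DA a) = DB (f a)) /\
  (forall a, f (RA a) = RB (f a)).

Section ProjS.
Variable S : DRC.
Definition projS : Type := { x : S | exists a, x = Dop S a }.

Definition projS_theta (p q : projS) : projS :=
  exist _ (Rop S (mul S (proj1_sig q) (proj1_sig p)))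
    (ex_intro _ (Rop S (mul S (proj1_sig q) (proj1_sig p)))
       (eq_sym (drc_DR S _))).

Definition projS_delta (p q : projS) : projS :=
  exist _ (Dop S (mul S (proj1_sig p) (proj1_sig q)))
    (ex_intro _ (mul S (proj1_sig p) (proj1_sig q)) eq_refl).
End ProjS.

Section FreeP.
Variable P : ProjAlg.

Inductive frel : list P -> list P -> Prop :=
| frel_idem : forall p, frel [p; p] [p]
| frel_theta : forall p q, frel [p; q] [p; theta P q p]
| frel_delta : forall p q, frel [p; q] [delta P p q; q].

Inductive fcong : list P -> list P -> Prop :=
| fcong_step : forall l u v r, frel u v -> fcong (l ++ u ++ r) (l ++ v ++ r)
| fcong_refl : forall u, fcong u u
| fcong_sym : forall u v, fcong u v -> fcong v u
| fcong_trans : forall u v w, fcong u v -> fcong v w -> fcong u w.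

Definition word : Type := (P * list P)%type.
Definition wlist (w : word) : list P := fst w :: snd w.

Definition FP : Type := { A : list P -> Prop | exists w : word, A = fcong (wlist w) }.

Definition cls (w : word) : FP := exist _ (fcong (wlist w)) (ex_intro _ w eq_refl).

Definition xgen (p : P) : FP := cls (p, []).

Definition rep (a : FP) : word :=
  proj1_sig (constructive_indefinite_description _ (proj2_sig a)).

Definition FP_mul (a b : FP) : FP :=
  cls (fst (rep a), snd (rep a) ++ wlist (rep b)).

Definition Frel (p q : P) : Prop := p = delta P p q /\ q = theta P q p.

Fixpoint Fchain_from (p : P) (l : list P) : Prop :=
  match l with
  | [] => True
  | q :: l' => Frel p q /\ Fchain_from q l'
  end.

Definition Fchain (w : word) : Prop := Fchain_from (fst w) (snd w).

(* a representative x_{p1}...x_{pk} of a with p1 F ... F pk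
   (exists by the paper; chosen by Hilbert's epsilon) *)
Definition chainrep (a : FP) : word :=
  epsilon (inhabits (rep a)) (fun w => Fchain w /\ cls w = a).

Definition FP_D (a : FP) : FP := xgen (fst (chainrep a)).
Definition FP_R (a : FP) : FP := xgen (last (snd (chainrep a)) (fst (chainrep a))).
End FreeP.

(* A DRC-morphism out of F(P) is determined by the images of the generators
   x_p, and a map on generators extends to a semigroup morphism as soon as
   the three defining relations hold in S: for projections e, f of S one has
   ff = f, e R(ef) = ef and D(ef) f = ef, which is exactly what the relations
   say once θ and δ are read as q θ_p = R(qp) and q δ_p = D(pq).  The
   extension also preserves D and R because every element of F(P) is
   represented by an F-chain x_{p1} ... x_{pk}, and the image of such a chain
   has D-value p1 φ and R-value pk φ. *)

From Stdlib Require Import List ClassicalEpsilon FunctionalExtensionality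
  PropExtensionality ProofIrrelevance.
Import ListNotations.
Set Implicit Arguments.

Section ProjAlgFacts.
Variable P : ProjAlg.

Lemma theta_idem (a x : P) : theta P a (theta P a x) = theta P a x.
Proof.
  rewrite <- (pa_theta_delta P a x) at 1.
  rewrite pa_delta_theta. apply pa_theta_delta.
Qed.

Lemma delta_idem (a x : P) : delta P a (delta P a x) = delta P a x.
Proof.
  rewrite <- (pa_delta_theta P a x) at 1.
  rewrite pa_theta_delta. apply pa_delta_theta.
Qed.

Lemma theta_by_theta (a b : P) : theta P (theta P a b) b = theta P a b.
Proof. generalize (pa_theta3 P a b b). now rewrite !pa_theta_id. Qed.

Lemma delta_by_delta (a b : P) : delta P (delta P a b) b = delta P a b.
Proof. generalize (pa_delta3 P a b b). now rewrite !pa_delta_id. Qed.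

Lemma theta_by_delta (p q : P) : theta P (delta P p q) p = delta P p q.
Proof. rewrite <- (pa_delta_theta P p q). apply pa_theta2. Qed.

Lemma delta_by_theta (p q : P) : delta P (theta P p q) p = theta P p q.
Proof. rewrite <- (pa_theta_delta P p q). apply pa_delta2. Qed.

Lemma theta_of_delta (p q : P) : theta P q (delta P p q) = theta P q p.
Proof. generalize (pa_theta5 P q p p). now rewrite theta_by_delta, pa_theta_id. Qed.

Lemma delta_of_theta (p q : P) : delta P p (theta P q p) = delta P p q.
Proof. generalize (pa_delta5 P p q q). now rewrite delta_by_theta, pa_delta_id. Qed.

Lemma Frel_delta_theta (p q : P) : Frel P (delta P p q) (theta P q p).
Proof.
  split.
  - rewrite <- (delta_of_theta p q) at 1 2. symmetry. apply delta_by_delta.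
  - rewrite <- (theta_of_delta p q) at 1 2. symmetry. apply theta_by_theta.
Qed.

Lemma Frel_delta_fixed (a b u : P) :
  Frel P a b -> theta P a u = u -> delta P u b = u.
Proof.
  intros [Ha _] Hu.
  generalize (pa_delta5 P u a b). rewrite Hu, delta_idem, <- Ha. intros ->.
  rewrite <- Hu at 1 2. apply delta_by_theta.
Qed.

Lemma fcong_app_l (m x y : list P) : fcong P x y -> fcong P (m ++ x) (m ++ y).
Proof.
  induction 1.
  - rewrite (app_assoc m l (u ++ r)), (app_assoc m l (v ++ r)).
    now apply fcong_step.
  - apply fcong_refl.
  - now apply fcong_sym.
  - eapply fcong_trans; eassumption.
Qed.

Lemma fcong_app_r (m x y : list P) : fcong P x y -> fcong P (x ++ m) (y ++ m).
Proof.
  induction 1.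
  - rewrite <- !app_assoc. now apply fcong_step.
  - apply fcong_refl.
  - now apply fcong_sym.
  - eapply fcong_trans; eassumption.
Qed.

Fixpoint theta_scan (u : P) (l : list P) : list P :=
  match l with
  | [] => []
  | b :: l' => theta P b u :: theta_scan (theta P b u) l'
  end.

Lemma fcong_theta_scan (l : list P) (u : P) : fcong P (u :: l) (u :: theta_scan u l).
Proof.
  revert u; induction l as [|b l IH]; intros u; simpl.
  - apply fcong_refl.
  - eapply fcong_trans.
    + exact (fcong_step [] l (frel_theta P u b)).
    + exact (fcong_app_l [u] (IH (theta P b u))).
Qed.

Lemma Fchain_theta_scan (l : list P) (a u : P) :
  Fchain_from P a l -> theta P a u = u -> Fchain_from P u (theta_scan u l).
Proof.
  revert a u; induction l as [|b l IH]; intros a u Hc Hu; simpl; [exact I|].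
  destruct Hc as [Hab Hl]. split.
  - rewrite <- (Frel_delta_fixed Hab Hu) at 1. apply Frel_delta_theta.
  - apply (IH b); [exact Hl | apply theta_idem].
Qed.

(* x_p x_(q1) ... = x_(q1 δ_p) x_(q1) ... = x_(q1 δ_p) x_(p θ_(q1)) ...,
   and q1 δ_p F p θ_(q1); the tail is then repaired by [theta_scan]. *)
Lemma Fchain_exists (l : list P) (p : P) :
  exists w : word P, Fchain w /\ fcong P (p :: l) (wlist w).
Proof.
  revert p; induction l as [|q l IH]; intros p.
  - exists (p, []). split; [exact I | apply fcong_refl].
  - destruct (IH q) as [[q1 l1] [Hc Hq]]; unfold Fchain, wlist in *; simpl in *.
    exists (delta P p q1, theta P q1 p :: theta_scan (theta P q1 p) l1). split.
    + split; [apply Frel_delta_theta|].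
      eapply Fchain_theta_scan; [exact Hc | apply theta_idem].
    + eapply fcong_trans; [exact (fcong_app_l [p] Hq)|].
      eapply fcong_trans; [exact (fcong_step [] l1 (frel_delta P p q1))|].
      eapply fcong_trans; [exact (fcong_step [] l1 (frel_theta P (delta P p q1) q1))|].
      rewrite theta_of_delta. apply (fcong_app_l [delta P p q1]), fcong_theta_scan.
Qed.

Lemma cls_eq (w1 w2 : word P) : fcong P (wlist w1) (wlist w2) -> cls w1 = cls w2.
Proof.
  intros H. apply subset_eq_compat, functional_extensionality. intros x.
  apply propositional_extensionality. split; intros H'.
  - eapply fcong_trans; [apply fcong_sym; exact H | exact H'].
  - eapply fcong_trans; [exact H | exact H'].
Qed.

Lemma rep_spec (a : FP P) : proj1_sig a = fcong P (wlist (rep a)).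
Proof.
  unfold rep. now destruct (constructive_indefinite_description _ (proj2_sig a)).
Qed.

Lemma cls_rep (a : FP P) : cls (rep a) = a.
Proof.
  generalize (rep_spec a). destruct a as [A HA]; simpl. intros Hrep.
  now apply subset_eq_compat.
Qed.

Lemma fcong_rep_cls (w : word P) : fcong P (wlist w) (wlist (rep (cls w))).
Proof. generalize (rep_spec (cls w)); simpl. intros ->. apply fcong_refl. Qed.

Lemma cls_mul (w1 w2 : word P) :
  FP_mul (cls w1) (cls w2) = cls (fst w1, snd w1 ++ wlist w2).
Proof.
  apply cls_eq. change (fcong P (wlist (rep (cls w1)) ++ wlist (rep (cls w2)))
                                (wlist w1 ++ wlist w2)).
  eapply fcong_trans; [apply fcong_app_l | apply fcong_app_r];
    apply fcong_sym, fcong_rep_cls.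
Qed.

Lemma chainrep_spec (a : FP P) : Fchain (chainrep a) /\ cls (chainrep a) = a.
Proof.
  unfold chainrep. apply epsilon_spec.
  destruct (Fchain_exists (snd (rep a)) (fst (rep a))) as [w [Hc Hw]].
  exists w. split; [exact Hc|].
  rewrite <- (cls_rep a). symmetry. now apply cls_eq.
Qed.

End ProjAlgFacts.

Section DRCFacts.
Variable S : DRC.

Lemma Dop_proj (e : projS S) : Dop S (proj1_sig e) = proj1_sig e.
Proof. destruct e as [e [a ->]]; simpl. now rewrite <- (drc_RD S a), drc_DR. Qed.

Lemma Rop_proj (e : projS S) : Rop S (proj1_sig e) = proj1_sig e.
Proof. destruct e as [e [a ->]]; simpl. apply drc_RD. Qed.

Lemma mul_proj_idem (e : projS S) : mul S (proj1_sig e) (proj1_sig e) = proj1_sig e.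
Proof. rewrite <- (Rop_proj e) at 2. apply drc_RR. Qed.

Lemma mul_Rop_mul_proj (a : S) (f : projS S) :
  mul S a (Rop S (mul S a (proj1_sig f))) = mul S a (proj1_sig f).
Proof.
  rewrite drc_R_sand, Rop_proj, !drc_assoc, drc_RR, <- drc_assoc.
  now rewrite mul_proj_idem.
Qed.

Lemma Dop_mul_mul_proj (e : projS S) (b : S) :
  mul S (Dop S (mul S (proj1_sig e) b)) b = mul S (proj1_sig e) b.
Proof.
  assert (He : mul S (Dop S (mul S (proj1_sig e) b)) (proj1_sig e)
               = Dop S (mul S (proj1_sig e) b)).
  { rewrite drc_D_sand, Dop_proj, <- drc_assoc. now rewrite mul_proj_idem. }
  rewrite <- He at 1. rewrite <- drc_assoc. apply drc_DL.
Qed.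

End DRCFacts.

Lemma last_cons_default {A : Type} (l : list A) (q p : A) : last (q :: l) p = last l q.
Proof.
  revert q p; induction l as [|b l IH]; intros q p; [reflexivity|].
  change (last (b :: l) p = last (b :: l) q). now rewrite !IH.
Qed.

Section Evaluation.
Variables (P : ProjAlg) (S : DRC) (phi : P -> projS S).

Fixpoint eval_from (p : P) (l : list P) : S :=
  match l with
  | [] => proj1_sig (phi p)
  | q :: l' => mul S (proj1_sig (phi p)) (eval_from q l')
  end.

Lemma eval_from_app (l m : list P) (p q : P) :
  eval_from p (l ++ q :: m) = mul S (eval_from p l) (eval_from q m).
Proof.
  revert p; induction l as [|a l IH]; intros p; simpl; [reflexivity|].
  rewrite IH. apply drc_assoc.
Qed.

(* The empty word evaluates to [None], the identity adjoined to S. *)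
Definition eval_list (l : list P) : option S :=
  match l with [] => None | p :: l' => Some (eval_from p l') end.

Definition mul_opt (x y : option S) : option S :=
  match x, y with
  | None, _ => y
  | _, None => x
  | Some a, Some b => Some (mul S a b)
  end.

Lemma eval_list_app (u v : list P) :
  eval_list (u ++ v) = mul_opt (eval_list u) (eval_list v).
Proof.
  destruct u as [|p u]; [reflexivity|].
  destruct v as [|q m]; simpl; [now rewrite app_nil_r|].
  now rewrite eval_from_app.
Qed.

Lemma eval_cls_of_mul_morphism (Psi : FP P -> S) :
  (forall a b, Psi (FP_mul a b) = mul S (Psi a) (Psi b)) ->
  (forall p, Psi (xgen P p) = proj1_sig (phi p)) ->
  forall w : word P, Psi (cls w) = eval_from (fst w) (snd w).
Proof.
  intros Hmul Hx [p l]; simpl. revert p; induction l as [|q l IH]; intros p.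
  - apply Hx.
  - transitivity (Psi (FP_mul (xgen P p) (cls (q, l)))).
    + unfold xgen. now rewrite cls_mul.
    + now rewrite Hmul, Hx, IH.
Qed.

Hypothesis phi_morph :
  is_pa_morphism (theta P) (delta P) (@projS_theta S) (@projS_delta S) phi.

Lemma phi_theta (p q : P) :
  proj1_sig (phi (theta P q p)) = Rop S (mul S (proj1_sig (phi p)) (proj1_sig (phi q))).
Proof. now rewrite (proj1 phi_morph). Qed.

Lemma phi_delta (p q : P) :
  proj1_sig (phi (delta P p q)) = Dop S (mul S (proj1_sig (phi p)) (proj1_sig (phi q))).
Proof. now rewrite (proj2 phi_morph). Qed.

Lemma eval_list_frel (u v : list P) : frel P u v -> eval_list u = eval_list v.
Proof.
  destruct 1 as [p|p q|p q]; simpl; f_equal.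
  - apply mul_proj_idem.
  - rewrite phi_theta. symmetry. apply mul_Rop_mul_proj.
  - rewrite phi_delta. symmetry. apply Dop_mul_mul_proj.
Qed.

Lemma eval_list_fcong (u v : list P) : fcong P u v -> eval_list u = eval_list v.
Proof.
  induction 1 as [l u v r H| | |]; try congruence.
  now rewrite !eval_list_app, (eval_list_frel H).
Qed.

Lemma Dop_eval_Fchain (l : list P) (p : P) :
  Fchain_from P p l -> Dop S (eval_from p l) = proj1_sig (phi p).
Proof.
  revert p; induction l as [|q l IH]; intros p Hc; simpl; [apply Dop_proj|].
  destruct Hc as [[Hp _] Hc].
  now rewrite drc_D_mul, (IH q Hc), <- phi_delta, <- Hp.
Qed.

Lemma Rop_eval_Fchain (l : list P) (p : P) :
  Fchain_from P p l -> Rop S (eval_from p l) = proj1_sig (phi (last l p)).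
Proof.
  revert p; induction l as [|q l IH]; intros p Hc; cbn [eval_from]; [apply Rop_proj|].
  destruct Hc as [[_ Hq] Hc].
  assert (Hhead : mul S (proj1_sig (phi q)) (eval_from q l) = eval_from q l).
  { rewrite <- (Dop_eval_Fchain l q Hc) at 1. apply drc_DL. }
  rewrite <- Hhead, drc_assoc, drc_R_mul, <- phi_theta, <- Hq, Hhead.
  now rewrite (IH q Hc), (last_cons_default l q p).
Qed.

Definition FP_eval (a : FP P) : S := eval_from (fst (rep a)) (snd (rep a)).

Lemma FP_eval_cls (w : word P) : FP_eval (cls w) = eval_from (fst w) (snd w).
Proof.
  generalize (eval_list_fcong (fcong_rep_cls w)).
  unfold FP_eval; simpl. congruence.
Qed.

Lemma FP_eval_chainrep (a : FP P) :
  FP_eval a = eval_from (fst (chainrep a)) (snd (chainrep a)).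
Proof. now rewrite <- FP_eval_cls, (proj2 (chainrep_spec a)). Qed.

Lemma FP_eval_morphism :
  is_drc_morphism (@FP_mul P) (@FP_D P) (@FP_R P) (mul S) (Dop S) (Rop S) FP_eval.
Proof.
  split; [|split]; intros a; unfold FP_mul, FP_D, FP_R, xgen.
  - intros b. rewrite FP_eval_cls. apply eval_from_app.
  - rewrite FP_eval_cls, FP_eval_chainrep, Dop_eval_Fchain; [reflexivity|].
    apply chainrep_spec.
  - rewrite FP_eval_cls, FP_eval_chainrep, Rop_eval_Fchain; [reflexivity|].
    apply chainrep_spec.
Qed.

End Evaluation.

Theorem proposition8p12 (P : ProjAlg) (S : DRC) (phi : P -> projS S) :
  is_pa_morphism (theta P) (delta P) (@projS_theta S) (@projS_delta S) phi ->
  exists Phi : FP P -> S,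
    is_drc_morphism (@FP_mul P) (@FP_D P) (@FP_R P) (mul S) (Dop S) (Rop S) Phi /\
    (forall p : P, Phi (@xgen P p) = proj1_sig (phi p)) /\
    (forall Psi : FP P -> S,
       is_drc_morphism (@FP_mul P) (@FP_D P) (@FP_R P) (mul S) (Dop S) (Rop S) Psi ->
       (forall p : P, Psi (@xgen P p) = proj1_sig (phi p)) ->
       forall a, Psi a = Phi a).
Proof.
  intros Hphi. exists (FP_eval phi). split; [|split].
  - now apply FP_eval_morphism.
  - intros p. unfold xgen. now rewrite FP_eval_cls.
  - intros Psi [Hmul _] Hx a.
    rewrite <- (cls_rep a), (eval_cls_of_mul_morphism phi Psi Hmul Hx).
    now rewrite FP_eval_cls.
Qed.
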